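(* Let $m\in\mathcal{P}(\mathcal{S})$ be such that $Q^d(m)$ is irreducible for every deterministic stationary strategy $d\in D^s$. Then $\det(\tilde{Q}^\pi(m))\neq 0$ for all $\pi\in\Pi^s$, and $\det(\tilde{Q}^\pi(m))$ has the same sign for all $\pi\in\Pi^s$.
   Context: $\mathcal{S}=\{1,\dots,S\}$ ($S>1$), $\mathcal{A}=\{1,\dots,A\}$; for each $a$ and $m\in\mathcal{P}(\mathcal{S})$, $(Q_{ija}(m))_{i,j}$ is a conservative generator (off-diagonal $\ge0$, zero row sums). $\Pi^s$: stationary strategies, i.e. matrices $(\pi_{ia})$ with rows in $\mathcal{P}(\mathcal{A})$; $D^s\subseteq\Pi^s$: deterministic ones ($\pi_{ia}\in\{0,1\}$), identified with maps $d:\mathcal{S}\to\mathcal{A}$. $Q^\pi(m)_{ij}=\sum_aQ_{ija}(m)\pi_{ia}$. $\tilde{Q}^\pi(m)$ is $(Q^\pi(m))^T$ with its last row replaced by $(1,\dots,1)$. Irreducible: the directed graph with an edge $i\to j$ ($i\ne j$) whenever the $(i,j)$ entry is positive is strongly connected. *)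

From HB Require Import structures.
From mathcomp Require Import all_boot all_order all_algebra.
Set Implicit Arguments. Unset Strict Implicit. Unset Printing Implicit Defensive.
Import Order.TTheory GRing.Theory Num.Theory.
Local Open Scope ring_scope.

Section Defs.
Variable R : realFieldType.

Definition prob_vec (S : nat) (m : 'rV[R]_S) : Prop :=
  (forall i, 0 <= m 0 i) /\ \sum_i m 0 i = 1.

Definition conservative_generator (S : nat) (M : 'M[R]_S) : Prop :=
  (forall i j, i != j -> 0 <= M i j) /\ (forall i, \sum_j M i j = 0).

Definition stationary (S A : nat) (pi : 'M[R]_(S, A)) : Prop :=
  (forall i a, 0 <= pi i a) /\ (forall i, \sum_a pi i a = 1).

Definition det_strategy (S A : nat) (d : 'I_S -> 'I_A) : 'M[R]_(S, A) :=
  \matrix_(i, a) (d i == a)%:R.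

Definition Qpi (S A : nat) (Q : 'rV[R]_S -> 'I_A -> 'M[R]_S)
  (m : 'rV[R]_S) (pi : 'M[R]_(S, A)) : 'M[R]_S :=
  \matrix_(i, j) \sum_a Q m a i j * pi i a.

Definition Qtilde (S : nat) (M : 'M[R]_S) : 'M[R]_S :=
  \matrix_(i, j) if (i : nat) == S.-1 then 1 else M j i.

Definition irreducible_mx (S : nat) (M : 'M[R]_S) : Prop :=
  forall i j : 'I_S, connect (fun k l : 'I_S => (k != l) && (0 < M k l)) i j.

End Defs.

From HB Require Import structures.
From mathcomp Require Import all_boot all_order all_algebra.
From mathcomp Require Import ring lra.
Set Implicit Arguments. Unset Strict Implicit. Unset Printing Implicit Defensive.
Import Order.TTheory GRing.Theory Num.Theory.
Local Open Scope ring_scope.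

(* Proof outline.
   1. Maximum principle for a conservative generator G: at a maximum
      (minimum) of z the entry (G z)_k is <= 0 (>= 0); hence if G z is a
      constant vector that constant is 0, and if G is moreover irreducible
      every solution of G z = 0 is constant along edges, so constant.
   2. Nonsingularity: a vector y with y Qtilde(G) = 0 gives, after zeroing
      its last entry, a vector z with G z = -y_last constant; by (1) the
      constant vanishes and z is constant, equal to z_last = 0, so y = 0.
   3. For a stationary pi, Q^pi(m) is a conservative generator, and it is
      irreducible since its edges contain those of Q^d(m) for any d choosing
      in each state an action of positive probability.
   4. Sign: det Qtilde(Q^pi(m)) is affine along a segment of strategies that
      differ in one row only; a nonvanishing affine function keeps its sign
      on [0,1].  Two strategies are joined by changing one row at a time. *)

Lemma fin_max_attained (R : realDomainType) (T : finType) (z : T -> R) (i0 : T) :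
  exists k, forall l, z l <= z k.
Proof.
by have [k _ hk] := arg_maxP z (isT : predT i0); exists k => l; apply: hk.
Qed.

Lemma fin_min_attained (R : realDomainType) (T : finType) (z : T -> R) (i0 : T) :
  exists k, forall l, z k <= z l.
Proof.
by have [k _ hk] := arg_minP z (isT : predT i0); exists k => l; apply: hk.
Qed.

Section Generator.
Variables (R : realFieldType) (S : nat) (G : 'M[R]_S).
Hypothesis hG : conservative_generator G.

(* Zero row sums let us measure z relative to its value at k. *)
Lemma gen_sum_shift (z : 'I_S -> R) k :
  \sum_l G k l * z l = \sum_l G k l * (z l - z k).
Proof.
under [RHS]eq_bigr do rewrite mulrBr.
by rewrite sumrB -mulr_suml hG.2 mul0r subr0.
Qed.

Lemma gen_term_le0_at_max (z : 'I_S -> R) k l :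
  (forall l, z l <= z k) -> G k l * (z l - z k) <= 0.
Proof.
move=> hmax; have [->|nlk] := eqVneq l k; first by rewrite subrr mulr0.
by rewrite mulr_ge0_le0 // ?subr_le0 // hG.1 // eq_sym.
Qed.

Lemma gen_sum_ge0_at_min (z : 'I_S -> R) k :
  (forall l, z k <= z l) -> 0 <= \sum_l G k l * z l.
Proof.
move=> hmin; rewrite gen_sum_shift; apply: sumr_ge0 => l _.
have [->|nlk] := eqVneq l k; first by rewrite subrr mulr0.
by rewrite mulr_ge0 // ?subr_ge0 // hG.1 // eq_sym.
Qed.

(* If G z is a constant vector c, then c = 0 (evaluate at a max and a min). *)
Lemma gen_const_image_zero (z : 'I_S -> R) (c : R) (i0 : 'I_S) :
  (forall k, \sum_l G k l * z l = c) -> c = 0.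
Proof.
move=> hc; apply/eqP; rewrite eq_le; apply/andP; split.
- have [imax hmax] := fin_max_attained z i0.
  rewrite -(hc imax) gen_sum_shift; apply: sumr_le0 => l _.
  exact: gen_term_le0_at_max.
- have [imin hmin] := fin_min_attained z i0.
  by rewrite -(hc imin); apply: gen_sum_ge0_at_min.
Qed.

Lemma gen_max_propagates (z : 'I_S -> R) k l :
  (forall l, z l <= z k) -> \sum_l G k l * z l = 0 ->
  k != l -> 0 < G k l -> z l = z k.
Proof.
move=> hmax; rewrite gen_sum_shift => h0 nkl Gpos.
have hN : \sum_l' - (G k l' * (z l' - z k)) = 0 by rewrite sumrN h0 oppr0.
have nonneg i : predT i -> 0 <= - (G k i * (z i - z k)).
  by move=> _; rewrite oppr_ge0 gen_term_le0_at_max.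
have /eqP := psumr_eq0P nonneg hN (isT : predT l).
by rewrite oppr_eq0 mulf_eq0 (gt_eqF Gpos) /= subr_eq0 => /eqP.
Qed.

Lemma irreducible_kernel_const (z : 'I_S -> R) (i0 : 'I_S) :
  irreducible_mx G -> (forall k, \sum_l G k l * z l = 0) ->
  forall j, z j = z i0.
Proof.
move=> hI h0.
have [imax hmax] := fin_max_attained z i0.
suff H j : z j = z imax by move=> j; rewrite H (H i0).
have /connectP [p pth ->] := hI imax j.
elim: p imax hmax pth => [|x p IH] k hk //= /andP [/andP [nkx Gpos] pth].
have ex : z x = z k by apply: gen_max_propagates nkx Gpos.
by rewrite (IH x) // => l; rewrite ex.
Qed.

End Generator.

Section Tilde.
Variables (R : realFieldType) (S : nat) (lst : 'I_S).
Hypothesis lst_last : (lst : nat) = S.-1.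

Definition drop_last (y : 'rV[R]_S) (i : 'I_S) : R :=
  if i == lst then 0 else y 0 i.

Lemma mulmx_Qtilde (G : 'M[R]_S) (y : 'rV[R]_S) j :
  (y *m Qtilde G) 0 j = y 0 lst + \sum_l G j l * drop_last y l.
Proof.
rewrite !mxE (bigD1 lst) //= [in RHS](bigD1 lst) //= /Qtilde !mxE lst_last.
rewrite /drop_last !eqxx mulr1 mulr0 add0r; congr (_ + _).
apply: eq_bigr => i nil; rewrite mxE.
have -> : ((i : nat) == S.-1) = false.
  by apply/negbTE; apply: contra nil; rewrite -lst_last => /eqP/val_inj ->.
by rewrite (negbTE nil) mulrC.
Qed.

Lemma Qtilde_nonsingular (G : 'M[R]_S) :
  conservative_generator G -> irreducible_mx G -> \det (Qtilde G) != 0.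
Proof.
move=> hG hI; apply/negP => /det0P [y /eqP ny0 hy]; apply: ny0.
have hGz k : \sum_l G k l * drop_last y l = - y 0 lst.
  by apply/eqP; rewrite -addr_eq0 addrC -mulmx_Qtilde hy mxE.
have ylst0 : y 0 lst = 0.
  by apply/eqP; rewrite -oppr_eq0 -(gen_const_image_zero hG lst hGz).
have hz0 k : \sum_l G k l * drop_last y l = 0 by rewrite hGz ylst0 oppr0.
have zconst := irreducible_kernel_const hG lst hI hz0.
apply/rowP => i; rewrite mxE; have := zconst i.
by rewrite /drop_last eqxx; case: eqP => [->|].
Qed.

End Tilde.

Section Strategies.
Variables (R : realFieldType) (S A : nat) (Q : 'rV[R]_S -> 'I_A -> 'M[R]_S).
Variable m : 'rV[R]_S.
Hypothesis hG : forall a, conservative_generator (Q m a).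

Lemma Qpi_generator (pi : 'M[R]_(S, A)) :
  stationary pi -> conservative_generator (Qpi Q m pi).
Proof.
move=> [p0 p1]; split.
- move=> i j nij; rewrite mxE; apply: sumr_ge0 => a _.
  by rewrite mulr_ge0 // (hG a).1.
- move=> i; under eq_bigr do rewrite mxE.
  rewrite exchange_big /= big1 // => a _.
  by rewrite -mulr_suml (hG a).2 mul0r.
Qed.

Lemma stationary_support (pi : 'M[R]_(S, A)) :
  stationary pi -> forall i, exists a, 0 < pi i a.
Proof.
move=> [p0 p1] i; apply/existsP; apply: contraT.
rewrite negb_exists => /forallP hn.
have : \sum_a pi i a <= 0 by apply: sumr_le0 => a _; rewrite leNgt hn.
by rewrite p1 ler10.
Qed.

Lemma Qpi_edge_det (pi : 'M[R]_(S, A)) (d : 'I_S -> 'I_A) k l :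
  stationary pi -> (forall i, 0 < pi i (d i)) ->
  0 < Qpi Q m (det_strategy R d) k l -> k != l -> 0 < Qpi Q m pi k l.
Proof.
move=> [p0 _] hd; rewrite !mxE (bigD1 (d k)) //= mxE eqxx mulr1.
rewrite big1 ?addr0 => [Qpos nkl|a nad]; last first.
  by rewrite mxE eq_sym (negbTE nad) mulr0.
rewrite (bigD1 (d k)) //= ltr_pwDl ?mulr_gt0 //.
by apply: sumr_ge0 => a _; rewrite mulr_ge0 // (hG a).1.
Qed.

Lemma Qpi_irreducible (pi : 'M[R]_(S, A)) : stationary pi ->
  (forall d : 'I_S -> 'I_A, irreducible_mx (Qpi Q m (det_strategy R d))) ->
  irreducible_mx (Qpi Q m pi).
Proof.
move=> hpi hirr; pose d i := xchoose (stationary_support hpi i).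
have hd i : 0 < pi i (d i) by exact: xchooseP (stationary_support hpi i).
move=> i j; apply: connect_sub (hirr d i j) => k l /andP [nkl hpos].
by apply: connect1; rewrite nkl (Qpi_edge_det hpi hd hpos nkl).
Qed.

Definition mix (t : R) (P P' : 'M[R]_(S, A)) : 'M[R]_(S, A) :=
  \matrix_(i, a) ((1 - t) * P i a + t * P' i a).

Lemma mix_stationary (P P' : 'M[R]_(S, A)) (t : R) :
  stationary P -> stationary P' -> 0 <= t <= 1 -> stationary (mix t P P').
Proof.
move=> [p0 p1] [q0 q1] /andP [t0 t1]; split.
- by move=> i a; rewrite mxE addr_ge0 // mulr_ge0 // subr_ge0.
- move=> i; under eq_bigr do rewrite mxE.
  by rewrite big_split /= -!mulr_sumr p1 q1 !mulr1 subrK.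
Qed.

(* Along a segment changing only row j, Q^pi(m) changes only in row j,
   i.e. Qtilde changes only in column j, so the determinant is affine. *)
Lemma det_Qtilde_mix (P P' : 'M[R]_(S, A)) (j : 'I_S) t :
  (forall k a, k != j -> P k a = P' k a) ->
  \det (Qtilde (Qpi Q m (mix t P P'))) =
  (1 - t) * \det (Qtilde (Qpi Q m P)) + t * \det (Qtilde (Qpi Q m P')).
Proof.
move=> hPP; have off k : lift j k != j by rewrite eq_sym neq_lift.
rewrite -!(det_tr (Qtilde _)).
apply: (determinant_multilinear (i0 := j)).
- apply/rowP => i; rewrite ?mxE.
  case: ifP => _; first by rewrite !mulr1 subrK.
  rewrite !mulr_sumr -big_split /=.
  by apply: eq_bigr => a _; rewrite ?mxE; ring.
- apply/matrixP => k i; rewrite ?mxE; case: ifP => // _; rewrite ?mxE.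
  apply: eq_bigr => a _; rewrite ?mxE (hPP _ _ (off k)).
  by rewrite -mulrDl subrK mul1r.
- apply/matrixP => k i; rewrite ?mxE; case: ifP => // _; rewrite ?mxE.
  apply: eq_bigr => a _; rewrite ?mxE -(hPP _ _ (off k)).
  by rewrite -mulrDl subrK mul1r.
Qed.

(* A quantity that is unchanged when a stationary strategy is modified in a
   single row is the same for all stationary strategies: change the rows
   0, 1, ..., S-1 one after the other. *)
Lemma stationary_rowwise_invariant (T : Type) (g : 'M[R]_(S, A) -> T) :
  (forall P P' (j : 'I_S), stationary P -> stationary P' ->
     (forall k a, k != j -> P k a = P' k a) -> g P = g P') ->
  forall pi1 pi2, stationary pi1 -> stationary pi2 -> g pi1 = g pi2.
Proof.
move=> hrow pi1 pi2 [p0 p1] [q0 q1].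
pose splice (n : nat) := \matrix_(i, a) if (i < n)%N then pi2 i a else pi1 i a.
have splice_stat n : stationary (splice n).
  split=> [i a|i]; first by rewrite mxE; case: ifP.
  under eq_bigr do rewrite mxE.
  by case: (i < n)%N.
have splice_gen n : (n <= S)%N -> g pi1 = g (splice n).
  elim: n => [_|n IH hn].
    by congr g; apply/matrixP => i a; rewrite mxE ltn0.
  rewrite IH; last exact: ltnW.
  apply: (hrow _ _ (Ordinal hn) (splice_stat n) (splice_stat n.+1)) => i a nin.
  rewrite !mxE ltnS (leq_eqVlt i).
  suff -> : (i == n :> nat) = false by [].
  by apply/negbTE; apply: contra nin => /eqP e; apply/eqP/val_inj.
rewrite (splice_gen S (leqnn S)); congr g.
by apply/matrixP => i a; rewrite mxE ltn_ord.
Qed.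

End Strategies.

Lemma sg_affine_nonvanishing (R : realFieldType) (a b : R) :
  (forall t, 0 <= t <= 1 -> (1 - t) * a + t * b != 0) -> Num.sg a = Num.sg b.
Proof.
move=> hne.
have crossing u v : 0 < u -> v < 0 ->
    exists2 t : R, 0 <= t <= 1 & (1 - t) * u + t * v = 0.
  move=> u0 v0; have uv : 0 < u - v by lra.
  exists (u / (u - v)); last by field; exact: lt0r_neq0.
  apply/andP; split; first by rewrite divr_ge0 // ltW.
  by rewrite ler_pdivrMr // mul1r; lra.
have a0 : a != 0.
  by have := hne 0; rewrite lexx ler01 subr0 mul1r mul0r addr0; apply.
have b0 : b != 0.
  by have := hne 1; rewrite lexx ler01 subrr mul1r mul0r add0r; apply.
have [ha|ha|] := ltgtP a 0; last by move/eqP: a0.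
- have [hb|hb|] := ltgtP b 0; last by move/eqP: b0.
  + by rewrite !ltr0_sg.
  + have [t /andP [t0 t1] ht] := crossing b a hb ha.
    have t01 : 0 <= 1 - t <= 1 by apply/andP; split; lra.
    move: (hne _ t01).
    have -> : (1 - (1 - t)) * a + (1 - t) * b = (1 - t) * b + t * a by ring.
    by rewrite ht eqxx.
- have [hb|hb|] := ltgtP b 0; last by move/eqP: b0.
  + have [t t01 ht] := crossing a b ha hb.
    by move: (hne t t01); rewrite ht eqxx.
  + by rewrite !gtr0_sg.
Qed.

Theorem mainTheorem7 (R : realFieldType) (S A : nat) (hS : (1 < S)%N)
  (Q : 'rV[R]_S -> 'I_A -> 'M[R]_S)
  (hQ : forall (mm : 'rV[R]_S) (a : 'I_A), prob_vec mm ->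
          conservative_generator (Q mm a))
  (m : 'rV[R]_S) (hm : prob_vec m)
  (hirr : forall d : 'I_S -> 'I_A, irreducible_mx (Qpi Q m (det_strategy R d))) :
  (forall pi : 'M[R]_(S, A), stationary pi -> \det (Qtilde (Qpi Q m pi)) != 0) /\
  (forall pi1 pi2 : 'M[R]_(S, A), stationary pi1 -> stationary pi2 ->
     Num.sg (\det (Qtilde (Qpi Q m pi1))) = Num.sg (\det (Qtilde (Qpi Q m pi2)))).
Proof.
have hG a : conservative_generator (Q m a) by exact: hQ.
have hlast : (S.-1 < S)%N by rewrite ltn_predL ltnW.
have nonsing (pi : 'M[R]_(S, A)) :
    stationary pi -> \det (Qtilde (Qpi Q m pi)) != 0.
  move=> hpi; apply: (@Qtilde_nonsingular _ _ (Ordinal hlast)) => //.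
    exact: Qpi_generator.
  exact: Qpi_irreducible.
split=> //; apply: stationary_rowwise_invariant => P P' j hP hP' hPP.
apply: sg_affine_nonvanishing => t t01.
rewrite -(det_Qtilde_mix _ _ _ hPP).
exact/nonsing/mix_stationary.
Qed.
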